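(* Let $\mathscr C\subset\mathbb R^m$ be compact, let $f:\mathscr C\to\mathbb R$ be continuous, and let $\epsilon>0$. Then there exist a positive integer $N$ and vectors $\bm u_{i,j}\in\mathbb R^{m+1}$ ($1\le j\le i\le N$) such that the polynomial $$p(\bm x)=\sum_{i=1}^N\prod_{j=1}^i\langle\check{\bm x},\bm u_{i,j}\rangle,\qquad \check{\bm x}=(\bm x,1)\in\mathbb R^{m+1},$$ satisfies $|f(\bm x)-p(\bm x)|<\epsilon$ for all $\bm x\in\mathscr C$. Moreover, if $p$ approximates $f$ within $\epsilon$ with total degree at most $k$, one may take $N=\sum_{i=0}^k\binom{m+i-1}{i}$.
   Context: $\langle\cdot,\cdot\rangle$ is the standard inner product on $\mathbb R^{m+1}$. *)

From HB Require Import structures.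
From mathcomp Require Import all_boot all_order all_algebra.
From mathcomp Require Import all_classical all_reals all_analysis.
Set Implicit Arguments. Unset Strict Implicit. Unset Printing Implicit Defensive.
Import Order.TTheory GRing.Theory Num.Theory.
Local Open Scope ring_scope.

Definition dotv (R : realType) (n : nat) (a b : 'rV[R]_n) : R :=
  \sum_(j < n) a 0 j * b 0 j.

Definition xcheck (R : realType) (m : nat) (x : 'rV[R]_m) : 'rV[R]_(m + 1) :=
  row_mx x (1 : 'rV[R]_1).

Definition prodpoly (R : realType) (m N : nat) (u : nat -> nat -> 'rV[R]_(m + 1))
    (x : 'rV[R]_m) : R :=
  \sum_(1 <= i < N.+1) \prod_(1 <= j < i.+1) dotv (xcheck x) (u i j).

Definition poly_deg_le (R : realType) (m k : nat) (q : 'rV[R]_m -> R) : Prop :=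
  exists c : {ffun 'I_m -> 'I_k.+1} -> R,
    forall x : 'rV[R]_m,
      q x = \sum_(a : {ffun 'I_m -> 'I_k.+1} | (\sum_(i < m) (a i : nat) <= k)%N)
              c a * \prod_(i < m) x 0 i ^+ a i.

From HB Require Import structures.
From mathcomp Require Import all_boot all_order all_algebra.
From mathcomp Require Import all_classical all_reals all_analysis.
From mathcomp Require Import ring lra zify.
Set Implicit Arguments.
Unset Strict Implicit.
Unset Printing Implicit Defensive.
Import Order.TTheory GRing.Theory Num.Theory.
Local Open Scope classical_set_scope.
Local Open Scope ring_scope.

(* Polynomials on R^m are exactly the sums of products of affine forms
   <x-check, v>, and any such sum can be given the shape of [prodpoly]: its
   i-th summand is a product of exactly i forms, so each product is padded with
   copies of the constant form 1 and placed in a slot of its own, unused slots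
   receiving the zero form.
   The first part is then the Stone-Weierstrass theorem, proved through its
   lattice version: the uniform closure of the polynomials on C is closed under
   |.|, because |t| is a uniform limit of polynomials in t^2 (the iteration
   p <- p + (t^2 - p^2)/2), hence under max and min, and affine functions
   interpolate any two values.
   For the second part, a polynomial of total degree at most k has at most
   C(m+k, k) = \sum_(i <= k) C(m+i-1, i) monomials; listing them by increasing
   degree puts a monomial of degree d, a product of d+1 forms, in a slot > d. *)

Section AffinePoly.
Context (R : realType) (m : nat).
Local Notation V := 'rV[R]_m.
Local Notation W := 'rV[R]_(m + 1).

Definition affine_form (v : W) (x : V) : R := dotv (xcheck x) v.

Definition const_form (c : R) : W := row_mx 0 (const_mx c).
Definition coord_form (i : 'I_m) : W := row_mx (delta_mx 0 i) (const_mx 0).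

Lemma affine_form_row (a : V) (c : R) x :
  affine_form (row_mx a (const_mx c)) x = dotv x a + c.
Proof.
rewrite /affine_form /dotv /xcheck big_split_ord /= big_ord1; congr (_ + _).
  by apply: eq_bigr => j _; rewrite !row_mxEl.
by rewrite !row_mxEr !mxE mul1r.
Qed.

Lemma affine_form0 x : affine_form 0 x = 0.
Proof. by rewrite /affine_form /dotv big1 // => j _; rewrite [X in _ * X]mxE mulr0. Qed.

Lemma affine_form_const c x : affine_form (const_form c) x = c.
Proof.
by rewrite affine_form_row /dotv big1 ?add0r // => j _; rewrite mxE mulr0.
Qed.

Lemma affine_form_coord i x : affine_form (coord_form i) x = x 0 i.
Proof.
rewrite affine_form_row addr0 /dotv (bigD1 i) //= big1.
  by rewrite mxE !eqxx mulr1 addr0.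
by move=> j /negbTE ji; rewrite mxE ji andbF mulr0.
Qed.

Definition sum_prod_forms (s : seq (seq W)) (x : V) : R :=
  \sum_(l <- s) \prod_(v <- l) affine_form v x.

Definition affine_poly (g : V -> R) := exists s, g =1 sum_prod_forms s.

Lemma affine_poly_cst c : affine_poly (fun _ => c).
Proof.
by exists [:: [:: const_form c]] => x; rewrite /sum_prod_forms !big_seq1 affine_form_const.
Qed.

Lemma affine_poly_coord i : affine_poly (fun x => x 0 i).
Proof.
by exists [:: [:: coord_form i]] => x; rewrite /sum_prod_forms !big_seq1 affine_form_coord.
Qed.

Lemma affine_polyD g h : affine_poly g -> affine_poly h -> affine_poly (g \+ h).
Proof. by move=> [s Hs] [t Ht]; exists (s ++ t) => x; rewrite /sum_prod_forms big_cat /= Hs Ht. Qed.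

Lemma affine_polyB g h : affine_poly g -> affine_poly h -> affine_poly (g \- h).
Proof.
move=> [s Hs] [t Ht]; exists (s ++ map (cons (const_form (-1))) t) => x.
rewrite /sum_prod_forms big_cat big_map /= Hs Ht -sumrN; congr (_ + _).
by apply: eq_bigr => l _; rewrite big_cons affine_form_const mulN1r.
Qed.

Lemma affine_polyM g h : affine_poly g -> affine_poly h -> affine_poly (g \* h).
Proof.
move=> [s Hs] [t Ht]; exists [seq l1 ++ l2 | l1 <- s, l2 <- t] => x.
rewrite /sum_prod_forms big_allpairs_dep /= Hs Ht mulr_suml; apply: eq_bigr => l1 _.
by rewrite mulr_sumr; apply: eq_bigr => l2 _; rewrite big_cat.
Qed.

Lemma sum_prod_forms_prodpoly (I : finType) (P : pred I) (F : I -> seq W)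
    (slot : I -> nat) (N : nat) :
  {in P &, injective slot} ->
  (forall a, P a -> (size (F a) <= slot a)%N /\ (0 < slot a <= N)%N) ->
  exists u, forall x,
    \sum_(a | P a) \prod_(v <- F a) affine_form v x = prodpoly N u x.
Proof.
move=> slot_inj slot_range.
pose pad l j := if (j <= size l)%N then nth 0 l j.-1 else const_form 1.
have prod_pad l i x : (size l <= i)%N ->
    \prod_(1 <= j < i.+1) affine_form (pad l j) x = \prod_(v <- l) affine_form v x.
  move=> li; rewrite (big_cat_nat _ (n := (size l).+1)) //=.
  rewrite [X in _ * X]big_nat [X in _ * X]big1 ?mulr1; last first.
    by move=> j /andP[jl _]; rewrite /pad leqNgt jl affine_form_const.
  rewrite big_add1 /= [RHS](big_nth 0); apply: eq_big_nat => j /andP[_ jl].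
  by rewrite /pad jl.
pose u i j := if [pick a | P a & slot a == i] is Some a then pad (F a) j else 0.
exists u => x; pose G a := \prod_(v <- F a) affine_form v x.
transitivity (\sum_(a | P a) \sum_(1 <= i < N.+1) (if slot a == i then G a else 0)).
  apply: eq_bigr => a Pa; have [_ /andP[a1 aN]] := slot_range a Pa.
  rewrite -big_mkcond /= (eq_bigl (fun i => i == slot a)) => [|i]; last by rewrite eq_sym.
  by rewrite big_nat1_eq a1 ltnS aN.
rewrite exchange_big /prodpoly; apply: eq_big_nat => i /andP[i1 _].
rewrite /u; case: pickP => [a0 /andP[Pa0 /eqP <-] | none].
  rewrite (bigD1 a0) //= eqxx big1 ?addr0.
    by rewrite prod_pad //; case: (slot_range a0 Pa0).
  move=> a /andP[Pa /negP na0]; case: eqP => // eq_slot.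
  by case: na0; apply/eqP; apply: slot_inj.
rewrite big1 => [|a Pa]; last by move: (none a); rewrite /= Pa /= => ->.
by rewrite big_ltn // -/(affine_form 0 x) affine_form0 mul0r.
Qed.

Lemma affine_poly_prodpoly g : affine_poly g ->
  exists2 N, (0 < N)%N & exists u, g =1 prodpoly N u.
Proof.
move=> [s Hs]; pose L := \max_(l <- s) size l.
pose slot (i : 'I_(size s)) := (L + i.+1)%N.
have slot_inj : {in predT &, injective slot}.
  by move=> i j _ _ /eqP; rewrite eqn_add2l eqSS => /eqP /val_inj.
have slot_range (i : 'I_(size s)) : predT i ->
    (size (nth [::] s i) <= slot i)%N /\ (0 < slot i <= (L + size s).+1)%N.
  have sizeL : (size (nth [::] s i) <= L)%N.
    by rewrite (leq_bigmax_seq (F := size)) ?mem_nth.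
  by move=> _; have := ltn_ord i; rewrite /slot; lia.
have [u Hu] := sum_prod_forms_prodpoly slot_inj slot_range.
exists (L + size s).+1 => //; exists u => x.
by rewrite Hs -Hu /sum_prod_forms (big_nth [::]) big_mkord.
Qed.
End AffinePoly.

Section Monomials.
Context (R : realType) (m k : nat).
Local Notation index := {ffun 'I_m -> 'I_k.+1}.

Definition mdeg (a : index) : nat := \sum_(i < m) (a i : nat).

(* Multi-indices are ranked by degree first, ties being broken by [enum_rank]. *)
Definition mkey (a : index) : nat := mdeg a * #|{: index}| + enum_rank a.

Definition mrank (a : index) : nat :=
  #|[set b : index | (mdeg b <= k)%N && (mkey b < mkey a)%N]%SET|.+1.

Lemma mkey_inj : injective mkey.
Proof.
have key_mod a : (mkey a %% #|{: index}| = enum_rank a)%N.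
  by rewrite /mkey modnMDl modn_small.
move=> a b eq_ab; apply: enum_rank_inj; apply: val_inj => /=.
by rewrite -key_mod eq_ab key_mod.
Qed.

Lemma mrank_lt a b : (mdeg b <= k)%N -> (mkey b < mkey a)%N -> (mrank b < mrank a)%N.
Proof.
move=> bk ba; rewrite /mrank ltnS; apply: proper_card; apply/properP; split.
  apply/fintype.subsetP => z; rewrite !inE => /andP[zk zb].
  by rewrite zk (ltn_trans zb ba).
by exists b; rewrite !inE ?bk ?ba ?ltnn.
Qed.

Lemma mrank_inj : {in (fun a : index => (mdeg a <= k)%N) &, injective mrank}.
Proof.
move=> a b ak bk eq_ab; have [ab|ba|] := ltngtP (mkey a) (mkey b).
- by have := mrank_lt ak ab; rewrite eq_ab ltnn.
- by have := mrank_lt bk ba; rewrite eq_ab ltnn.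
- exact: mkey_inj.
Qed.

Lemma mrank_le a :
  (mdeg a <= k)%N -> (mrank a <= #|[set b : index | (mdeg b <= k)%N]%SET|)%N.
Proof.
move=> ak; rewrite (cardsD1 a) inE ak add1n ltnS /mrank.
apply: subset_leq_card; apply/fintype.subsetP => z; rewrite !inE => /andP[zk za].
by rewrite zk andbT; apply: contraTneq za => ->; rewrite ltnn.
Qed.

(* The [mdeg a] multi-indices [j e_i0] (j < mdeg a), for a coordinate i0 with
   [a i0 != 0], all precede [a]. *)
Lemma mdeg_lt_mrank a : (mdeg a <= k)%N -> (mdeg a < mrank a)%N.
Proof.
move=> ak; rewrite /mrank ltnS.
have [->|dpos] := posnP (mdeg a); first by [].
have [i0 _] : exists i0 : 'I_m, (a i0 : nat) != 0%N.
  move: dpos; rewrite lt0n /mdeg sum_nat_eq0 negb_forall => /existsP [i Hi].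
  by exists i.
pose b (j : 'I_(mdeg a)) : index := [ffun l => if l == i0 then inord j else ord0].
have deg_b j : mdeg (b j) = j.
  rewrite /mdeg (bigD1 i0) //= big1 => [|l /negbTE li]; last by rewrite ffunE li.
  by rewrite ffunE eqxx inordK ?addn0 // ltnS (leq_trans (ltnW (ltn_ord j))).
have b_inj : injective b.
  by move=> j1 j2 eq_b; apply: val_inj; rewrite /= -(deg_b j1) -(deg_b j2) eq_b.
rewrite -[X in (X <= _)%N]card_ord -(card_imset _ b_inj).
apply: subset_leq_card; apply/fintype.subsetP => z /imsetP [j _ ->].
rewrite !inE deg_b (leq_trans (ltnW (ltn_ord j))) //= /mkey deg_b.
have key_lt (i d K r1 r2 : nat) : (i < d)%N -> (r1 < K)%N -> (i * K + r1 < d * K + r2)%N.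
  by move=> *; nia.
exact: key_lt (ltn_ord j) (ltn_ord _).
Qed.

Lemma card_mdeg_le :
  (#|[set b : index | (mdeg b <= k)%N]%SET| <= \sum_(0 <= i < k.+1) 'C(m + i - 1, i))%N.
Proof.
have -> : (\sum_(0 <= i < k.+1) 'C(m + i - 1, i))%N = 'C(m + k, k).
  elim: k => [|k' IH]; first by rewrite big_nat1 !bin0.
  by rewrite big_nat_recr //= IH addnS subn1 /= binS addnC.
pose tup (a : index) : m.-tuple 'I_k.+1 := [tuple a i | i < m].
have tup_inj : injective tup.
  move=> a b eq_ab; apply/ffunP => i.
  by rewrite -(tnth_mktuple a i) -(tnth_mktuple b i) -/(tup a) eq_ab.
rewrite -(bin_sub (leq_addl m k)) addnK -(card_partial_ord_partitions m k).
rewrite -(card_imset _ tup_inj); apply: subset_leq_card.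
apply/fintype.subsetP => z /imsetP [a]; rewrite !inE => ak ->.
by rewrite big_tuple; under eq_bigr do rewrite tnth_mktuple.
Qed.

Definition monomial_forms (c : R) (a : index) : seq 'rV[R]_(m + 1) :=
  const_form m c ::
    [seq coord_form R l | l <- flatten [seq nseq (a l) l | l <- enum 'I_m]].

Lemma size_monomial_forms c a : size (monomial_forms c a) = (mdeg a).+1.
Proof.
rewrite /= size_map size_flatten /shape -map_comp sumnE big_map.
by under eq_bigr do rewrite /= size_nseq; rewrite big_enum.
Qed.

Lemma prod_monomial_forms c a x :
  \prod_(v <- monomial_forms c a) affine_form v x = c * \prod_(i < m) x 0 i ^+ a i.
Proof.
rewrite big_cons affine_form_const big_map; congr (_ * _).
under eq_bigr do rewrite affine_form_coord.
rewrite big_flatten /= big_map.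
by under eq_bigr do rewrite big_nseq iter_mulr_1; rewrite big_enum.
Qed.

Lemma poly_deg_le_prodpoly (q : 'rV[R]_m -> R) : poly_deg_le k q ->
  exists u, q =1 prodpoly (\sum_(0 <= i < k.+1) 'C(m + i - 1, i))%N u.
Proof.
case=> c Hc.
have slot_range a : (mdeg a <= k)%N -> (size (monomial_forms (c a) a) <= mrank a)%N /\
    (0 < mrank a <= \sum_(0 <= i < k.+1) 'C(m + i - 1, i))%N.
  move=> ak; rewrite size_monomial_forms mdeg_lt_mrank //=.
  by split=> //; exact: leq_trans (mrank_le ak) card_mdeg_le.
have [u Hu] := sum_prod_forms_prodpoly mrank_inj slot_range.
exists u => x; rewrite Hc -Hu; apply: eq_bigr => a _.
by rewrite prod_monomial_forms.
Qed.
End Monomials.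

Section SqrtIteration.
Context (R : realType).

(* For [w] in [0, 1] the iterates increase to [sqrt w]. *)
Fixpoint sqrt_iter (n : nat) (w : R) : R :=
  if n is n'.+1 then sqrt_iter n' w + (w - sqrt_iter n' w ^+ 2) / 2 else 0.

Lemma sqrt_iter_bound (s : R) n : 0 <= s <= 1 ->
  0 <= sqrt_iter n (s ^+ 2) <= s /\ s - sqrt_iter n (s ^+ 2) <= s * (1 - s / 2) ^+ n.
Proof.
move=> /andP[s0 s1]; elim: n => [|n [/andP[p0 ps] IH]] /=.
  by rewrite lexx s0 expr0 mulr1 subr0.
set p := sqrt_iter n (s ^+ 2) in p0 ps IH *.
have step : s - (p + (s ^+ 2 - p ^+ 2) / 2) = (s - p) * (1 - (s + p) / 2) by field.
have f0 : 0 <= 1 - (s + p) / 2 by lra.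
split.
  rewrite addr_ge0 ?divr_ge0 ?subr_ge0 ?ler_sqr //=.
  by rewrite -subr_ge0 step mulr_ge0 // subr_ge0.
rewrite step exprSr mulrA; apply: (le_trans (y := (s - p) * (1 - s / 2))).
  by rewrite ler_wpM2l ?subr_ge0 //; lra.
by rewrite ler_wpM2r //; lra.
Qed.

Lemma sqrt_iter_unif (d : R) : 0 < d -> exists n,
  forall s : R, 0 <= s <= 1 -> `|s - sqrt_iter n (s ^+ 2)| <= d.
Proof.
move=> d0; pose a := Num.min d 1.
have a0 : 0 < a by rewrite lt_min d0 ltr01.
have a1 : a <= 1 by rewrite ge_min lexx orbT.
have ad : a <= d by rewrite ge_min lexx.
have ratio_lt1 : `|1 - a / 2| < 1 by rewrite ger0_norm; lra.
have /fcvgrPdist_lt /(_ a a0) [N _ HN] := cvg_expr ratio_lt1.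
have {}HN : (1 - a / 2) ^+ N < a.
  by have := HN N (leqnn N); rewrite /= sub0r normrN ger0_norm // exprn_ge0 //; lra.
exists N => s /andP[s0 s1].
have s01 : 0 <= s <= 1 by rewrite s0 s1.
have [/andP[p0 ps] err] := sqrt_iter_bound N s01.
rewrite ger0_norm ?subr_ge0 //; apply: le_trans err _.
have q0 : 0 <= 1 - s / 2 by lra.
have [sa|lt_as] := leP s a.
  rewrite (le_trans _ ad) // (le_trans _ sa) // ler_piMr //.
  by rewrite exprn_ile1 //; lra.
rewrite (le_trans _ ad) // (le_trans _ (ltW HN)) // -[X in _ <= X]mul1r.
by rewrite ler_pM ?exprn_ge0 // lerXn2r ?nnegrE //; lra.
Qed.

Lemma norm_sqrt_iter_approx (M d : R) : 0 < M -> 0 < d -> exists n, forall t : R,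
  `|t| <= M -> `| `|t| - M * sqrt_iter n (t ^+ 2 / M ^+ 2)| <= d.
Proof.
move=> M0 d0; have [n Hn] := sqrt_iter_unif (divr_gt0 d0 M0).
exists n => t tM.
have s01 : 0 <= `|t| / M <= 1.
  by rewrite ler_pdivrMr // mul1r tM divr_ge0 // ltW.
have := Hn _ s01; rewrite expr_div_n real_normK ?num_real // => err.
have -> : `|t| - M * sqrt_iter n (t ^+ 2 / M ^+ 2) =
    M * (`|t| / M - sqrt_iter n (t ^+ 2 / M ^+ 2)) by field; exact: lt0r_neq0.
by rewrite normrM gtr0_norm // mulrC -ler_pdivlMr.
Qed.
End SqrtIteration.

Section LatticeApproximation.
Context (R : realType) (m : nat) (C : set 'rV[R^o]_m).
Local Notation T := 'rV[R^o]_m.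

Lemma compact_near_cover (P : T -> T -> Prop) : compact C ->
  (forall y, C y -> \forall z \near within C (nbhs y), P y z) ->
  exists2 D : seq T, {subset D <= C} & forall z, C z -> exists2 y, y \in D & P y z.
Proof.
rewrite compact_cover => cover near_P.
have [y _|z Cz|D DC covD] := cover T C (fun y => (fun z => C z -> P y z)°).
- exact: open_interior.
- by exists z => //; exact: near_P.
exists (finmap.enum_fset D) => [y yD|z Cz]; first by have := DC y yD; rewrite in_setE.
by have [y yD Py] := covD z Cz; exists y => //; apply: (interior_subset Py).
Qed.

Lemma within_continuous_near0 (g : T -> R^o) y e :
  {within C, continuous g} -> C y -> g y = 0 -> 0 < e ->
  \forall z \near within C (nbhs y), `|g z| < e.
Proof.
move=> /subspace_continuousP cg Cy gy0 e0.
have near_gy : \forall z \near within C (nbhs y), `|g y - g z| < e.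
  by move: (cg y Cy) => /fcvgrPdist_lt /(_ e e0).
by apply: filterS near_gy => z; rewrite gy0 sub0r normrN.
Qed.

Lemma within_continuous_bounded (g : T -> R^o) : compact C ->
  {within C, continuous g} -> exists2 M, 0 < M & forall x, C x -> `|g x| <= M.
Proof.
move=> cC cg; have [M [_ HM]] := compact_bounded (continuous_compact cg cC).
exists (Num.max 1 (M + 1)) => [|x Cx]; first by rewrite lt_max ltr01.
by apply: HM; [rewrite lt_max ltrDl ltr01 orbT | exists x].
Qed.

Lemma bigop_fun_closed (L : (T -> R^o) -> Prop) (op : R -> R -> R) :
  (forall g h, L g -> L h -> L (fun z => op (g z) (h z))) ->
  forall (F : T -> T -> R^o) b (D : seq T), (forall y, L (F y)) -> L b ->
  L (fun z => \big[op/b z]_(y <- D) F y z).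
Proof.
move=> L_op F b D LF Lb; elim: D => [|a D IH]; first by under eq_fun do rewrite big_nil.
by under eq_fun do rewrite big_cons; exact: L_op.
Qed.

Lemma lattice_uniform_approx (L : (T -> R^o) -> Prop) (f : T -> R^o) (e : R) :
  compact C -> {within C, continuous f} -> 0 < e ->
  (forall g, L g -> {within C, continuous g}) ->
  (forall g h, L g -> L h -> L (fun z => Num.max (g z) (h z))) ->
  (forall g h, L g -> L h -> L (fun z => Num.min (g z) (h z))) ->
  (forall x y, exists2 h, L h & h x = f x /\ h y = f y) ->
  exists2 g, L g & forall x, C x -> `|f x - g x| < e.
Proof.
move=> cC cf e0 L_cont L_max L_min interp.
have L_bigmax := bigop_fun_closed L_max.
have L_bigmin := bigop_fun_closed L_min.
have near_gap (g : T -> R^o) x : L g -> C x -> g x = f x ->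
    \forall z \near within C (nbhs x), `|g z - f z| < e.
  move=> Lg Cx gx; apply: (within_continuous_near0 (g := g \- f)) => //=.
    by move=> z; exact: continuousB (L_cont _ Lg z) (cf z).
  by rewrite gx subrr.
have lower x : exists gx, [/\ L gx, gx x = f x & forall z, C z -> f z - e < gx z].
  have /choice [h /all_and2 [Lh hxy]] : forall y, exists h, L h /\ h x = f x /\ h y = f y.
    by move=> y; have [h Lh hxy] := interp x y; exists h.
  have [|D _ covD] := @compact_near_cover (fun y z => f z - e < h y z) cC.
    move=> y Cy; have := near_gap _ y (Lh y) Cy (hxy y).2.
    by apply: filterS => z; rewrite ltr_norml => /andP[lt_z _]; lra.
  exists (fun z => \big[Num.max/h x z]_(y <- D) h y z); split; first exact: L_bigmax.
    apply: (big_ind (fun v => v = f x)) => [|_ _ -> ->|y _]; first exact: (hxy x).1.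
      exact: maxxx.
    exact: (hxy y).1.
  move=> z Cz; have [y yD lt_y] := covD z Cz.
  by apply: lt_le_trans lt_y _; exact: le_bigmax_seq.
have /choice [g /all_and3 [Lg gxx g_lower]] := lower.
have [|D _ covD] := @compact_near_cover (fun x z => g x z < f z + e) cC.
  move=> x Cx; have := near_gap _ x (Lg x) Cx (gxx x).
  by apply: filterS => z; rewrite ltr_norml => /andP[_ lt_z]; lra.
exists (fun z => \big[Num.min/g 0 z]_(x <- D) g x z); first exact: L_bigmin.
move=> z Cz; rewrite ltr_norml; apply/andP; split.
  have [x xD lt_x] := covD z Cz.
  suff : \big[Num.min/g 0 z]_(x <- D) g x z <= g x z by lra.
  exact: ge_bigmin_seq.
suff : f z - e < \big[Num.min/g 0 z]_(x <- D) g x z by lra.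
apply: (big_ind (fun v => f z - e < v)) => [|v w|x _]; try exact: g_lower.
by move=> ltv ltw; rewrite lt_min ltv ltw.
Qed.
End LatticeApproximation.

Section Approximable.
Context (R : realType) (m : nat) (C : set 'rV[R^o]_m).
Local Notation T := 'rV[R^o]_m.

Definition approximable (g : T -> R^o) := forall e, 0 < e ->
  exists2 p, affine_poly p & forall x, C x -> `|g x - p x| < e.

Lemma affine_poly_sqrt_iter n (g : 'rV[R]_m -> R) :
  affine_poly g -> affine_poly (fun x => sqrt_iter n (g x)).
Proof.
move=> pg; elim: n => [|n IH]; first exact: affine_poly_cst.
pose s x := sqrt_iter n (g x).
have -> : (fun x => sqrt_iter n.+1 (g x)) = s \+ (g \- s \* s) \* (fun _ => 2^-1).
  by apply/funext => x; rewrite /= expr2.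
exact: affine_polyD IH
  (affine_polyM (affine_polyB pg (affine_polyM IH IH)) (affine_poly_cst _ _)).
Qed.

Lemma approximable_poly g : affine_poly g -> approximable g.
Proof. by move=> pg e e0; exists g => // x _; rewrite subrr normr0. Qed.

Lemma approximableD g h : approximable g -> approximable h -> approximable (g \+ h).
Proof.
move=> ag ah e e0; have e20 : 0 < e / 2 by rewrite divr_gt0.
have [p pp gp] := ag _ e20; have [q pq hq] := ah _ e20.
exists (p \+ q); first exact: affine_polyD.
move=> x Cx; rewrite /= opprD addrACA; apply: le_lt_trans (ler_normD _ _) _.
by rewrite (splitr e) ltrD ?gp ?hq.
Qed.

Lemma approximableZ c g : approximable g -> approximable (fun x => c * g x).
Proof.
move=> ag e e0; have c1 : 0 < `|c| + 1 by rewrite ltr_wpDl.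
have [p pp gp] := ag _ (divr_gt0 e0 c1).
exists (fun x => c * p x); first exact: affine_polyM (affine_poly_cst _ c) pp.
move=> x Cx; rewrite -mulrBr normrM; have := gp x Cx; rewrite ltr_pdivlMr // => lt_gp.
by apply: le_lt_trans lt_gp; rewrite mulrC ler_wpM2l // lerDl.
Qed.

Lemma approximableB g h : approximable g -> approximable h -> approximable (g \- h).
Proof.
move=> ag ah; have -> : g \- h = g \+ (fun x => -1 * h x).
  by apply/funext => x; rewrite /= mulN1r.
exact: approximableD ag (approximableZ (-1) ah).
Qed.

(* [|g|] is approximated by [M * sqrt_iter n (p^2 / M^2)], where [p] approximates
   [g] and [M] bounds [p] on [C]. *)
Lemma approximable_norm g : (exists M, forall x, C x -> `|g x| <= M) ->
  approximable g -> approximable (fun x => `|g x|).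
Proof.
move=> [Mg gMg] ag e e0; have e20 : 0 < e / 2 by rewrite divr_gt0.
have [p pp gp] := ag _ e20.
pose M := Num.max 1 (Mg + e / 2).
have M0 : 0 < M by rewrite lt_max ltr01.
have [n Hn] := norm_sqrt_iter_approx M0 (divr_gt0 e0 (ltr0n R 4)).
exists (fun x => M * sqrt_iter n (p x ^+ 2 / M ^+ 2)).
  apply: affine_polyM (affine_poly_cst _ M) _.
  apply: affine_poly_sqrt_iter.
  exact: affine_polyM (affine_polyM pp pp) (affine_poly_cst _ _).
move=> x Cx.
have pM : `|p x| <= M.
  rewrite le_max; apply/orP; right.
  have -> : p x = g x - (g x - p x) by ring.
  by apply: le_trans (ler_normB _ _) _; rewrite lerD ?gMg ?ltW ?gp.
have gp_norm := le_lt_trans (ler_dist_dist (g x) (p x)) (gp x Cx).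
have err := Hn _ pM.
have -> : `|g x| - M * sqrt_iter n (p x ^+ 2 / M ^+ 2) =
    (`|g x| - `|p x|) + (`|p x| - M * sqrt_iter n (p x ^+ 2 / M ^+ 2)) by ring.
apply: le_lt_trans (ler_normD _ _) _.
by rewrite (splitr e) ltrD // (le_lt_trans err) // ltr_pM2l // ltf_pV2 ?posrE // ltr_nat.
Qed.

Lemma approximable_max (g h : T -> R^o) : compact C ->
  {within C, continuous g} -> {within C, continuous h} ->
  approximable g -> approximable h -> approximable (g \max h).
Proof.
move=> cC cg ch ag ah; have cgh : {within C, continuous (g \- h)}.
  by move=> x; exact: continuousB (cg x) (ch x).
have [M _ bounded_gh] := within_continuous_bounded cC cgh.
have -> : g \max h = fun x => 2^-1 * ((g \+ h) x + `|(g \- h) x|).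
  by apply/funext => x; rewrite /= maxr_absE mulrC.
apply: approximableZ; apply: approximableD (approximableD ag ah) _.
by apply: approximable_norm; [exists M | exact: approximableB].
Qed.

Lemma approximable_min (g h : T -> R^o) : compact C ->
  {within C, continuous g} -> {within C, continuous h} ->
  approximable g -> approximable h -> approximable (g \min h).
Proof.
move=> cC cg ch ag ah; have -> : g \min h = (g \+ h) \- (g \max h).
  by apply/funext => x; rewrite /= -(addr_min_max (g x)) addrK.
exact: approximableB (approximableD ag ah) (approximable_max cC cg ch ag ah).
Qed.
End Approximable.

Lemma affine_interpolation (R : realType) (m : nat) (f : 'rV[R^o]_m -> R^o)
    (x y : 'rV[R^o]_m) :
  exists2 h : 'rV[R^o]_m -> R^o, affine_poly h /\ continuous h & h x = f x /\ h y = f y.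
Proof.
have [<-|xy] := eqVneq x y.
  exists (fun _ => f x) => //; split; [exact: affine_poly_cst | exact: cst_continuous].
have [i xy_i] : exists i, x 0 i != y 0 i.
  apply/existsP; apply: contraNT xy => /existsPn eq_xy.
  by apply/eqP/rowP => i; apply/eqP; have := eq_xy i; rewrite negbK.
pose c := (f y - f x) / (y 0 i - x 0 i).
exists ((fun _ => f x : R) \+
        (fun _ => c) \* ((fun z : 'rV[R^o]_m => z 0 i : R^o) \- (fun _ => x 0 i))).
  split.
    apply: affine_polyD (affine_poly_cst _ _) (affine_polyM (affine_poly_cst _ _) _).
    exact: affine_polyB (affine_poly_coord _ _) (affine_poly_cst _ _).
  move=> z; apply: (@continuousD _ _ _ (fun _ => f x)); first exact: cst_continuous.
  apply: (@continuousM _ _ (fun _ => c)); first exact: (@cst_continuous _ R^o c z).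
  apply: (@continuousB _ _ _ (fun z : 'rV[R^o]_m => z 0 i : R^o)).
    exact: coord_continuous.
  exact: cst_continuous.
by rewrite /= subrr mulr0 addr0 /c divfK ?subr_eq0 1?eq_sym // addrC subrK.
Qed.

Theorem mainTheorem2 (R : realType) (m : nat) (C : set 'rV[R^o]_m)
    (f : 'rV[R^o]_m -> R^o) (eps : R) :
  compact C -> {within C, continuous f} -> 0 < eps ->
  (exists N : nat, (0 < N)%N /\
     exists u : nat -> nat -> 'rV[R]_(m + 1),
       forall x, C x -> `|f x - prodpoly N u x| < eps)
  /\
  (forall (k : nat) (q : 'rV[R]_m -> R), poly_deg_le k q ->
     (forall x, C x -> `|f x - q x| < eps) ->
     exists u : nat -> nat -> 'rV[R]_(m + 1),
       forall x, C x ->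
         `|f x - prodpoly (\sum_(0 <= i < k.+1) 'C(m + i - 1, i))%N u x| < eps).
Proof.
move=> cC cf eps0; split; last first.
  move=> k q /poly_deg_le_prodpoly [u qu] fq.
  by exists u => x Cx; rewrite -qu; exact: fq.
have eps20 : 0 < eps / 2 by rewrite divr_gt0.
pose L g := {within C, continuous g} /\ approximable C g.
have [g [_ ag] fg] : exists2 g, L g & forall x, C x -> `|f x - g x| < eps / 2.
  apply: lattice_uniform_approx => // [g [] //|g h [cg ag] [ch ah]|g h [cg ag] [ch ah]|x y].
  - by split; [move=> z; exact: continuous_max (cg z) (ch z) | exact: approximable_max].
  - by split; [move=> z; exact: continuous_min (cg z) (ch z) | exact: approximable_min].
  - have [h [ph ch] hxy] := affine_interpolation f x y.
    by exists h => //; split; [exact: continuous_subspaceT | exact: approximable_poly].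
have [p pp gp] := ag _ eps20.
have [N N0 [u pu]] := affine_poly_prodpoly pp.
exists N; split => //; exists u => x Cx; rewrite -pu.
have -> : f x - p x = (f x - g x) + (g x - p x) by ring.
by apply: le_lt_trans (ler_normD _ _) _; rewrite (splitr eps) ltrD ?fg ?gp.
Qed.
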